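(* Let $n_i,m_i$ be positive integers and let $A_i\in\mathbb{R}^{n_i\times n_i}$, $B_i\in\mathbb{R}^{n_i\times m_i}$, $F_i\in\mathbb{R}^{n_i\times m_i}$, $C_i\in\mathbb{R}^{m_i\times n_i}$. Consider the discrete-time subsystem with state $x_i\in\mathbb{R}^{n_i}$, control input $u_i\in\mathbb{R}^{m_i}$ and exogenous (coupling) input $v_i\in\mathbb{R}^{m_i}$, $$x_i^+=A_ix_i+B_iu_i+F_iv_i,\qquad y_i=C_ix_i,$$ together with the virtual output $z_i=y_i+D_iv_i=C_ix_i+D_iv_i$, where $D_i\in\mathbb{R}^{m_i\times m_i}$. Suppose there exist matrices $S_i\in\mathbb{R}^{m_i\times m_i}$, $G_i\in\mathbb{R}^{m_i\times n_i}$ and symmetric positive definite matrices $E_i\in\mathbb{R}^{n_i\times n_i}$, $H_i\in\mathbb{R}^{n_i\times n_i}$ such that $$\begin{bmatrix} E_i & \tfrac12 E_iC_i^\top & (A_iE_i+B_iG_i)^\top & E_i\\ \tfrac12 C_iE_i & \tfrac12 S_i+\tfrac12 S_i^\top & F_i^\top & 0\\ A_iE_i+B_iG_i & F_i & E_i & 0\\ E_i & 0 & 0 & H_i \end{bmatrix}\succeq 0 .$$ Then, with $K_i=G_iE_i^{-1}$ and $D_i=S_i$, the closed-loop subsystem under the control law $u_i=K_ix_i$, i.e. $x_i^+=(A_i+B_iK_i)x_i+F_iv_i$, $z_i=C_ix_i+D_iv_i$, is strictly passive with respect to the input-output pair $(v_i,z_i)$; specifically, with $P_i=E_i^{-1}$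 and $\Gamma_i=H_i^{-1}$ (both positive definite), for all $x_i\in\mathbb{R}^{n_i}$ and $v_i\in\mathbb{R}^{m_i}$, $$(x_i^+)^\top P_ix_i^+-x_i^\top P_ix_i\le v_i^\top z_i-x_i^\top\Gamma_ix_i .$$
   Context: A discrete-time system $x^+=f(x,v)$ with output $z=h(x,v)$ is called strictly passive with respect to the input-output pair $(v,z)$ if there exist a continuous storage function $V:\mathbb{R}^n\to\mathbb{R}_{\ge0}$ with $V(0)=0$ and a dissipation rate $\gamma:\mathbb{R}^n\to\mathbb{R}_{\ge 0}$ with $\gamma(0)=0$ and $\gamma(x)>0$ for $x\neq0$, such that $V(x^+)-V(x)\le z^\top v-\gamma(x)$ for all $x$ and $v$. The notation $M\succeq0$ means the symmetric matrix $M$ is positive semidefinite. *)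

From HB Require Import structures.
From mathcomp Require Import all_boot all_order all_algebra.
Set Implicit Arguments. Unset Strict Implicit. Unset Printing Implicit Defensive.
Import Order.TTheory GRing.Theory Num.Theory.
Local Open Scope ring_scope.

Definition qform {R : numDomainType} {k : nat} (M : 'M[R]_k) (x : 'cV[R]_k) : R :=
  (x^T *m M *m x) 0 0.

Definition psd {R : numDomainType} {k : nat} (M : 'M[R]_k) : Prop :=
  M^T = M /\ forall x : 'cV[R]_k, 0 <= qform M x.

Definition pd {R : numDomainType} {k : nat} (M : 'M[R]_k) : Prop :=
  M^T = M /\ forall x : 'cV[R]_k, x != 0 -> 0 < qform M x.

Definition lmi_mx {R : numFieldType} {n m : nat}
  (A : 'M[R]_n) (B F : 'M[R]_(n, m)) (C : 'M[R]_(m, n))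
  (S : 'M[R]_m) (G : 'M[R]_(m, n)) (E H : 'M[R]_n) : 'M[R]_(n + m + n + n) :=
  let Acl := A *m E + B *m G in
  block_mx
    (block_mx
       (block_mx E ((2%:R)^-1 *: (E *m C^T))
                 ((2%:R)^-1 *: (C *m E)) ((2%:R)^-1 *: S + (2%:R)^-1 *: S^T))
       (col_mx Acl^T F^T)
       (row_mx Acl F) E)
    (col_mx (col_mx E 0) 0)
    (row_mx (row_mx E 0) 0)
    H.

(** Evaluate the LMI at w = (P x, v, -P x⁺, -Γ x), where P = E⁻¹ and Γ = H⁻¹.
    As P and Γ cancel E and H, the blocks contribute xᵀPx, vᵀCx, vᵀSv,
    -2 (x⁺)ᵀP((A + BK)x + Fv) = -2 (x⁺)ᵀPx⁺, (x⁺)ᵀPx⁺, -2 xᵀΓx and xᵀΓx, so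
    0 <= wᵀ M w reads xᵀPx + vᵀz - (x⁺)ᵀPx⁺ - xᵀΓx >= 0. *)
From HB Require Import structures.
From mathcomp Require Import all_boot all_order all_algebra.
From mathcomp Require Import ring lra.
Import Order.TTheory GRing.Theory Num.Theory.
Local Open Scope ring_scope.

Set Implicit Arguments.
Unset Strict Implicit.
Unset Printing Implicit Defensive.

Definition bform {R : comPzRingType} {p q : nat}
    (u : 'cV[R]_p) (M : 'M[R]_(p, q)) (v : 'cV[R]_q) : R :=
  (u^T *m M *m v) 0 0.

Section BilinearForm.
Variable R : comPzRingType.
Implicit Types p q : nat.

Lemma bform_tr p q (u : 'cV[R]_p) (M : 'M_(p, q)) v : bform u M v = bform v M^T u.
Proof. by rewrite /bform -[in LHS](trmxK (u^T *m M *m v)) mxE !trmx_mul trmxK mulmxA. Qed.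

Lemma bformD p q (u : 'cV[R]_p) (M N : 'M_(p, q)) v :
  bform u (M + N) v = bform u M v + bform u N v.
Proof. by rewrite /bform mulmxDr mulmxDl mxE. Qed.

Lemma bformZ p q (u : 'cV[R]_p) (M : 'M_(p, q)) v a :
  bform u (a *: M) v = a * bform u M v.
Proof. by rewrite /bform -scalemxAr -scalemxAl mxE. Qed.

Lemma bform0 p q (u : 'cV[R]_p) (v : 'cV[R]_q) : bform u 0 v = 0.
Proof. by rewrite /bform mulmx0 mul0mx mxE. Qed.

Lemma bformDr p q (u : 'cV[R]_p) (M : 'M_(p, q)) v w :
  bform u M (v + w) = bform u M v + bform u M w.
Proof. by rewrite /bform mulmxDr mxE. Qed.

Lemma bformNl p q (u : 'cV[R]_p) (M : 'M_(p, q)) v : bform (- u) M v = - bform u M v.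
Proof. by rewrite /bform linearN /= !mulNmx mxE. Qed.

Lemma bformNr p q (u : 'cV[R]_p) (M : 'M_(p, q)) v : bform u M (- v) = - bform u M v.
Proof. by rewrite /bform mulmxN mxE. Qed.

Lemma bform_mull p p' q (X : 'M[R]_(p, p')) u (M : 'M_(p, q)) v :
  bform (X *m u) M v = bform u (X^T *m M) v.
Proof. by rewrite /bform trmx_mul !mulmxA. Qed.

Lemma bform_mulr p q q' (X : 'M[R]_(q, q')) (u : 'cV_p) (M : 'M_(p, q)) v :
  bform u M (X *m v) = bform u (M *m X) v.
Proof. by rewrite /bform !mulmxA. Qed.

Lemma bform_row p q1 q2 (u : 'cV[R]_p) (M1 : 'M_(p, q1)) (M2 : 'M_(p, q2)) v1 v2 :
  bform u (row_mx M1 M2) (col_mx v1 v2) = bform u M1 v1 + bform u M2 v2.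
Proof. by rewrite /bform mul_mx_row mul_row_col mxE. Qed.

Lemma bform_col p1 p2 q (u1 : 'cV[R]_p1) (u2 : 'cV_p2) (M1 : 'M_(p1, q)) M2 v :
  bform (col_mx u1 u2) (col_mx M1 M2) v = bform u1 M1 v + bform u2 M2 v.
Proof. by rewrite /bform tr_col_mx mul_row_col mulmxDl mxE. Qed.

End BilinearForm.

Section QuadraticForm.
Variable R : numDomainType.
Implicit Types p q : nat.

Lemma qformE p (M : 'M[R]_p) x : qform M x = bform x M x.
Proof. by []. Qed.

Lemma qformN p (M : 'M[R]_p) x : qform M (- x) = qform M x.
Proof. by rewrite !qformE bformNl bformNr opprK. Qed.

Lemma qform_tr p (M : 'M[R]_p) x : qform M^T x = qform M x.
Proof. by rewrite !qformE [RHS]bform_tr. Qed.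

Lemma qform_block p q (M11 : 'M[R]_p) (M12 : 'M_(p, q)) M21 (M22 : 'M_q) u1 u2 :
  qform (block_mx M11 M12 M21 M22) (col_mx u1 u2) =
  qform M11 u1 + bform u2 (M12^T + M21) u1 + qform M22 u2.
Proof.
rewrite !qformE /block_mx bform_col !bform_row bformD (bform_tr u1 M12 u2).
by rewrite !addrA.
Qed.

Lemma qform_invmx p (E : 'M[R]_p) x : E^T = E -> E \in unitmx ->
  qform E (invmx E *m x) = qform (invmx E) x.
Proof.
move=> sE uE; rewrite !qformE bform_mull bform_mulr trmx_inv sE.
by rewrite mulVmx // mul1mx.
Qed.

End QuadraticForm.

Section PositiveDefinite.
Variable R : numFieldType.
Implicit Types p : nat.

Lemma pd_unitmx p (E : 'M[R]_p) : pd E -> E \in unitmx.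
Proof.
case=> _ pE; rewrite unitmxE unitfE; apply/det0P => -[w w0 wE].
have /pE : w^T != 0 by rewrite -(inj_eq (@trmx_inj _ _ _)) trmxK trmx0.
by rewrite /qform trmxK wE mul0mx mxE ltxx.
Qed.

Lemma pd_invmx p (E : 'M[R]_p) : pd E -> pd (invmx E).
Proof.
move=> pdE; have uE := pd_unitmx pdE; case: pdE => sE pE; split.
  by rewrite trmx_inv sE.
move=> x x0; rewrite -qform_invmx //; apply: pE.
by apply: contra x0 => /eqP Ex0; rewrite -[x](mulKVmx uE) Ex0 mulmx0.
Qed.

End PositiveDefinite.

Section ClosedLoopLMI.
Variables (R : numFieldType) (n m : nat).
Variables (A : 'M[R]_n) (B F : 'M[R]_(n, m)) (C : 'M[R]_(m, n)).
Variables (S : 'M[R]_m) (G : 'M[R]_(m, n)) (E H : 'M[R]_n).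
Hypotheses (sE : E^T = E) (sH : H^T = H) (uE : E \in unitmx) (uH : H \in unitmx).

Let P := invmx E.
Let Gamma := invmx H.

Lemma qform_lmi_mx x v (xp := (A + B *m (G *m P)) *m x + F *m v) :
  qform (lmi_mx A B F C S G E H)
    (col_mx (col_mx (col_mx (P *m x) v) (- (P *m xp))) (- (Gamma *m x)))
  = qform P x + (v^T *m (C *m x + S *m v)) 0 0 - qform P xp - qform Gamma x.
Proof.
have sP : P^T = P by rewrite trmx_inv sE.
have sGamma : Gamma^T = Gamma by rewrite trmx_inv sH.
have halves : 2%:R^-1 + 2%:R^-1 = 1 :> R.
  by rewrite -mulr2n -[_ *+ 2]mulr_natr mulVf ?pnatr_eq0.
have half_twice k l (M : 'M[R]_(k, l)) : 2%:R^-1 *: M + 2%:R^-1 *: M = M.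
  by rewrite -scalerDl halves scale1r.
have output_term : (v^T *m (C *m x + S *m v)) 0 0 = bform v C x + qform S v.
  by rewrite /bform mulmxDr mxE !mulmxA.
have feedthrough_block : qform (2%:R^-1 *: S + 2%:R^-1 *: S^T) v = qform S v.
  by rewrite !qformE bformD !bformZ -!qformE qform_tr -mulrDl halves mul1r.
have output_block :
    bform v ((2%:R^-1 *: (E *m C^T))^T + 2%:R^-1 *: (C *m E)) (P *m x) = bform v C x.
  by rewrite linearZ /= trmx_mul trmxK sE half_twice bform_mulr -mulmxA mulmxV ?mulmx1.
have dynamics_block :
    bform (P *m xp) (A *m E + B *m G) (P *m x) + bform (P *m xp) F v = qform P xp.
  rewrite !bform_mull sP -!bform_mulr -bformDr qformE mulmxA.
  by rewrite mulmxDl -!mulmxA mulmxV ?mulmx1.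
have dissipation_block : bform (Gamma *m x) E (P *m x) = qform Gamma x.
  by rewrite bform_mull bform_mulr sGamma -mulmxA mulmxV ?mulmx1.
rewrite /lmi_mx /= !qform_block !tr_col_mx !trmxK !trmx0 !add_row_mx !bform_row.
rewrite output_block feedthrough_block !addr0 !bform0 !addr0 sE !(bformD, bformNl).
rewrite dissipation_block !qformN !qform_invmx // output_term -/P -/Gamma.
rewrite -dynamics_block bformD.
ring.
Qed.

End ClosedLoopLMI.

Theorem lemma1 (R : realFieldType) (n m : nat) (hn : (0 < n)%N) (hm : (0 < m)%N)
  (A : 'M[R]_n) (B F : 'M[R]_(n, m)) (C : 'M[R]_(m, n))
  (S : 'M[R]_m) (G : 'M[R]_(m, n)) (E H : 'M[R]_n) :
  pd E -> pd H -> psd (lmi_mx A B F C S G E H) ->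
  let K := G *m invmx E in
  let D := S in
  let P := invmx E in
  let Gamma := invmx H in
  pd P /\ pd Gamma /\
  forall (x : 'cV[R]_n) (v : 'cV[R]_m),
    let xp := (A + B *m K) *m x + F *m v in
    let z := C *m x + D *m v in
    qform P xp - qform P x <= (v^T *m z) 0 0 - qform Gamma x.
Proof.
move=> pdE pdH [_ lmi_psd] K D P Gamma.
split; first exact: pd_invmx.
split; first exact: pd_invmx.
move=> x v /=; set xp := _ + F *m v.
have := lmi_psd (col_mx (col_mx (col_mx (P *m x) v) (- (P *m xp))) (- (Gamma *m x))).
rewrite qform_lmi_mx ?pdE.1 ?pdH.1 ?pd_unitmx //.
lra.
Qed.
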